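(* Let $n\ge1$ and $a=(a_0,\dots,a_n)\in\mathbb{Z}^{n+1}$ with $a_i\ge 0$ for all $i$ and $a_0=a_n=0$. Let $m\ge 0$ and let $0=c_0<c_1<\cdots<c_m<c_{m+1}=1$ and $0=e_0<e_1<\cdots<e_m<e_{m+1}=1$ be real numbers. Assume that a tropical recurrent minimal sequence $y=(y_i)_{i\in\mathbb{Z}}$ satisfies $a$. For each $i\in\mathbb{Z}$ let $0\le j\le m$ be the unique index with $c_j\le \langle y_i\rangle<c_{j+1}$ and put $x_i:=\lfloor y_i\rfloor+e_j$. Then $x=(x_i)_{i\in\mathbb{Z}}$ is also a tropical recurrent minimal sequence satisfying $a$.
   Context: $\langle e\rangle=e-\lfloor e\rfloor$ denotes the fractional part of a real $e$. A tropical recurrent sequence is $y=(y_j)_{j\in\mathbb{Z}}$ with real entries; it satisfies $a$ if for every $k\in\mathbb{Z}$ the minimum $\min_{0\le i\le n}\{a_i+y_{i+k}\}$ is attained for at least two different indices $i$; it is minimal if for every $j\in\mathbb{Z}$ there is $k$ with $j-n\le k\le j$ and $a_{j-k}+y_j=\min_{0\le i\le n}\{a_i+y_{i+k}\}$. *)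

From Stdlib Require Export Reals ZArith Lia Lra.
Open Scope R_scope.

(* floor of a real: Int_part r = up r - 1 is the greatest integer <= r *)
Definition floorZ (r : R) : Z := Int_part r.
Definition frac (r : R) : R := r - IZR (floorZ r).

Definition tterm (a : nat -> Z) (y : Z -> R) (k : Z) (i : nat) : R :=
  IZR (a i) + y (Z.of_nat i + k)%Z.

Definition attains_min (n : nat) (a : nat -> Z) (y : Z -> R) (k : Z) (i : nat) : Prop :=
  (i <= n)%nat /\ forall l : nat, (l <= n)%nat -> tterm a y k i <= tterm a y k l.

Definition satisfies (n : nat) (a : nat -> Z) (y : Z -> R) : Prop :=
  forall k : Z, exists i1 i2 : nat,
    i1 <> i2 /\ attains_min n a y k i1 /\ attains_min n a y k i2.

Definition minimal (n : nat) (a : nat -> Z) (y : Z -> R) : Prop :=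
  forall j : Z, exists k : Z,
    (j - Z.of_nat n <= k)%Z /\ (k <= j)%Z /\
    attains_min n a y k (Z.to_nat (j - k)).


(* The map [r |-> floor r + e_j], where [c_j <= <r> < c_(j+1)], is nondecreasing
   and commutes with integer translations.  Hence every comparison
   [a_i + y_(i+k) <= a_l + y_(l+k)] with integer [a_i], [a_l] survives the passage
   from [y] to [x], so each index attaining a minimum for [y] attains it for [x];
   both [satisfies] and [minimal] only speak about such indices, so no hypothesis
   on [a] is needed. *)

Lemma floorZ_spec (r : R) : IZR (floorZ r) <= r < IZR (floorZ r) + 1.
Proof. unfold floorZ; destruct (base_Int_part r); lra. Qed.

Lemma floorZ_unique (r : R) (z : Z) : IZR z <= r < IZR z + 1 -> floorZ r = z.
Proof.
  intros Hz; unfold floorZ, Int_part.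
  rewrite <- (tech_up r (z + 1)); [lia | |]; rewrite plus_IZR; lra.
Qed.

Lemma floorZ_add_IZR (A : Z) (r : R) : floorZ (IZR A + r) = (A + floorZ r)%Z.
Proof.
  apply floorZ_unique; rewrite plus_IZR; pose proof (floorZ_spec r); lra.
Qed.

Lemma frac_add_IZR (A : Z) (r : R) : frac (IZR A + r) = frac r.
Proof. unfold frac; rewrite floorZ_add_IZR, plus_IZR; ring. Qed.

Lemma frac_bounds (r : R) : 0 <= frac r < 1.
Proof. unfold frac; pose proof (floorZ_spec r); lra. Qed.

Lemma IZR_succ_le (p q : Z) : (p < q)%Z -> IZR p + 1 <= IZR q.
Proof.
  intros Hpq; rewrite <- plus_IZR; apply IZR_le; lia.
Qed.

Lemma floorZ_le (s t : R) : s <= t -> (floorZ s <= floorZ t)%Z.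
Proof.
  intros Hst; destruct (Z_lt_le_dec (floorZ t) (floorZ s)) as [Hlt|]; [|easy].
  pose proof (IZR_succ_le _ _ Hlt); pose proof (floorZ_spec s); pose proof (floorZ_spec t); lra.
Qed.

Section Quantization.

Variables (m : nat) (c e : nat -> R).

Lemma nondecreasing_of_steps (f : nat -> R) :
  (forall j : nat, (j <= m)%nat -> f j < f (S j)) ->
  forall i j : nat, (i <= j <= S m)%nat -> f i <= f j.
Proof.
  intros Hf i j [Hij Hj]; induction Hij as [|j Hij IH]; [lra|].
  pose proof (Hf j ltac:(lia)); pose proof (IH ltac:(lia)); lra.
Qed.

Definition in_cell (j : nat) (r : R) : Prop := c j <= r < c (S j).

Hypothesis c_0 : c 0%nat = 0.
Hypothesis c_last : c (S m) = 1.
Hypothesis c_incr : forall j : nat, (j <= m)%nat -> c j < c (S j).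

Lemma in_cell_exists (r : R) :
  0 <= r < 1 -> exists j, (j <= m)%nat /\ in_cell j r.
Proof.
  intros Hr.
  enough (Hk : forall k, (k <= S m)%nat -> r < c k ->
                 exists j, (j < k)%nat /\ in_cell j r).
  { destruct (Hk (S m)) as [j [Hj Hjr]]; [lia | lra |].
    exists j; split; [lia | exact Hjr]. }
  induction k as [|k IH]; intros Hk Hrk; [lra|].
  destruct (Rlt_or_le r (c k)) as [Hl|Hl].
  - destruct (IH ltac:(lia) Hl) as [j [Hj Hjr]]; exists j; split; [lia | exact Hjr].
  - exists k; split; [lia | unfold in_cell; lra].
Qed.

Lemma in_cell_le (j1 j2 : nat) (r1 r2 : R) :
  (j1 <= m)%nat -> (j2 <= m)%nat -> in_cell j1 r1 -> in_cell j2 r2 ->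
  r1 <= r2 -> (j1 <= j2)%nat.
Proof.
  unfold in_cell; intros Hj1 Hj2 H1 H2 Hr.
  destruct (le_lt_dec j1 j2) as [|Hlt]; [easy|].
  pose proof (nondecreasing_of_steps c c_incr (S j2) j1 ltac:(lia)); lra.
Qed.

Hypothesis e_0 : e 0%nat = 0.
Hypothesis e_last : e (S m) = 1.
Hypothesis e_incr : forall j : nat, (j <= m)%nat -> e j < e (S j).

Lemma e_bounds (j : nat) : (j <= m)%nat -> 0 <= e j < 1.
Proof.
  intros Hj; rewrite <- e_0, <- e_last; split.
  - apply (nondecreasing_of_steps e e_incr); lia.
  - pose proof (nondecreasing_of_steps e e_incr j m ltac:(lia)).
    pose proof (e_incr m ltac:(lia)); lra.
Qed.

Lemma quantize_le (s t : R) (j1 j2 : nat) :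
  (j1 <= m)%nat -> (j2 <= m)%nat -> in_cell j1 (frac s) -> in_cell j2 (frac t) ->
  s <= t -> IZR (floorZ s) + e j1 <= IZR (floorZ t) + e j2.
Proof.
  intros Hj1 Hj2 Hs Ht Hst.
  pose proof (e_bounds j1 Hj1); pose proof (e_bounds j2 Hj2).
  destruct (Z_le_lt_eq_dec _ _ (floorZ_le s t Hst)) as [Hlt|Heq].
  - pose proof (IZR_succ_le _ _ Hlt); lra.
  - assert (Hfrac : frac s <= frac t) by (unfold frac; rewrite Heq; lra).
    assert (Hj12 : (j1 <= j2)%nat) by exact (in_cell_le _ _ _ _ Hj1 Hj2 Hs Ht Hfrac).
    pose proof (nondecreasing_of_steps e e_incr j1 j2 ltac:(lia)).
    rewrite Heq; lra.
Qed.

Lemma quantize_shift_le (A B : Z) (s t : R) (j1 j2 : nat) :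
  (j1 <= m)%nat -> (j2 <= m)%nat -> in_cell j1 (frac s) -> in_cell j2 (frac t) ->
  IZR A + s <= IZR B + t ->
  IZR A + (IZR (floorZ s) + e j1) <= IZR B + (IZR (floorZ t) + e j2).
Proof.
  intros Hj1 Hj2 Hs Ht Hst.
  rewrite <- frac_add_IZR with (A := A) in Hs.
  rewrite <- frac_add_IZR with (A := B) in Ht.
  pose proof (quantize_le _ _ _ _ Hj1 Hj2 Hs Ht Hst) as Hq.
  rewrite !floorZ_add_IZR, !plus_IZR in Hq; lra.
Qed.

End Quantization.

Definition shift_monotone (y x : Z -> R) : Prop :=
  forall (A B : Z) (u v : Z), IZR A + y u <= IZR B + y v -> IZR A + x u <= IZR B + x v.

Section ShiftMonotone.

Variables (n : nat) (a : nat -> Z) (y x : Z -> R).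
Hypothesis yx : shift_monotone y x.

Lemma attains_min_shift_monotone (k : Z) (i : nat) :
  attains_min n a y k i -> attains_min n a x k i.
Proof.
  intros [Hi Hmin]; split; [exact Hi|].
  intros l Hl; apply yx, Hmin, Hl.
Qed.

Lemma satisfies_shift_monotone : satisfies n a y -> satisfies n a x.
Proof.
  intros Hy k; destruct (Hy k) as [i1 [i2 [Hne [H1 H2]]]].
  exists i1, i2; auto using attains_min_shift_monotone.
Qed.

Lemma minimal_shift_monotone : minimal n a y -> minimal n a x.
Proof.
  intros Hy j; destruct (Hy j) as [k [Hlo [Hhi Hk]]].
  exists k; auto using attains_min_shift_monotone.
Qed.

End ShiftMonotone.

Theorem lemma3 (n : nat) (a : nat -> Z) (m : nat) (c e : nat -> R) (y x : Z -> R) :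
  (1 <= n)%nat ->
  (forall i : nat, (i <= n)%nat -> (0 <= a i)%Z) ->
  a 0%nat = 0%Z -> a n = 0%Z ->
  c 0%nat = 0 -> c (S m) = 1 ->
  (forall j : nat, (j <= m)%nat -> c j < c (S j)) ->
  e 0%nat = 0 -> e (S m) = 1 ->
  (forall j : nat, (j <= m)%nat -> e j < e (S j)) ->
  satisfies n a y -> minimal n a y ->
  (forall (i : Z) (j : nat), (j <= m)%nat -> c j <= frac (y i) < c (S j) ->
      x i = IZR (floorZ (y i)) + e j) ->
  satisfies n a x /\ minimal n a x.
Proof.
  intros _ _ _ _ Hc0 Hc1 Hc He0 He1 He Hsat Hmin Hx.
  assert (Hyx : shift_monotone y x).
  { intros A B u v Huv.
    destruct (in_cell_exists m c Hc0 Hc1 (frac (y u)) (frac_bounds _)) as [j1 [Hj1 Hu]].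
    destruct (in_cell_exists m c Hc0 Hc1 (frac (y v)) (frac_bounds _)) as [j2 [Hj2 Hv]].
    rewrite (Hx u j1 Hj1 Hu), (Hx v j2 Hj2 Hv).
    exact (quantize_shift_le m c e Hc He0 He1 He _ _ _ _ _ _ Hj1 Hj2 Hu Hv Huv). }
  split; [apply (satisfies_shift_monotone n a y x Hyx Hsat)
         | apply (minimal_shift_monotone n a y x Hyx Hmin)].
Qed.
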